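(* Let $n=3$ and let $d=(d_1,d_2,d_3)$ satisfy $d_1\ge d_2\ge d_3\ge 0$ and $d_1+d_2+d_3=1$. Then $\min_\chi\|d-\mathcal{SS}(\chi)\|_1\le\tfrac13$, the minimum ranging over all weighted voting games $\chi$ on $N=\{1,2,3\}$, and equality holds if and only if $d$ lies in one of the following sets: (i) $d_1=\tfrac56$, $\tfrac1{12}\le d_2\le\tfrac16$; (ii) $\tfrac23\le d_1\le\tfrac56$, $d_1+d_2=1$ (i.e. $d_3=0$); (iii) $\tfrac12\le d_1\le\tfrac23$, $d_2=\tfrac13$; (iv) $d_1=\tfrac12$, $\tfrac14\le d_2\le\tfrac13$; (v) $\tfrac5{12}\le d_1\le\tfrac12$, $d_1+d_2=\tfrac56$ (i.e. $d_3=\tfrac16$).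
   Context: A simple game on $N=\{1,\dots,n\}$ is a monotone Boolean function $\chi:2^N\to\{0,1\}$ with $\chi(\emptyset)=0$, $\chi(N)=1$; it is a weighted voting game if there are weights $w_i\ge0$ and a quota $q$ with $\chi(U)=1\iff\sum_{i\in U}w_i\ge q$. An $i$-swing is a set $U\subseteq N\setminus\{i\}$ with $\chi(U)=0$, $\chi(U\cup\{i\})=1$. Shapley–Shubik index: $\mathcal{SS}(\chi,i)=\frac1{n!}\sum_{U\text{ an }i\text{-swing}}|U|!(n-|U|-1)!$, and $\mathcal{SS}(\chi)=(\mathcal{SS}(\chi,1),\dots,\mathcal{SS}(\chi,n))$. For $n=3$, up to permutation of voters, the achievable Shapley–Shubik vectors are $(1,0,0)$, $(\tfrac23,\tfrac16,\tfrac16)$, $(\tfrac12,\tfrac12,0)$, $(\tfrac13,\tfrac13,\tfrac13)$. *)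

From HB Require Import structures.
From mathcomp Require Import all_boot all_order all_algebra.
Set Implicit Arguments. Unset Strict Implicit. Unset Printing Implicit Defensive.
Import Order.TTheory GRing.Theory Num.Theory.
Local Open Scope ring_scope.

(* Voters N = {1,...,n} are represented by 'I_n (voter k+1 is ordinal k).
   A game is a function chi : {set 'I_n} -> bool. *)

Definition simple_game (n : nat) (chi : {set 'I_n} -> bool) : Prop :=
  [/\ (forall U V : {set 'I_n}, U \subset V -> chi U -> chi V),
      chi set0 = false & chi setT = true].

Definition weighted_voting_game (R : realFieldType) (n : nat)
    (chi : {set 'I_n} -> bool) : Prop :=
  simple_game chi /\
  exists (w : 'I_n -> R) (q : R),
    (forall i, 0 <= w i) /\
    (forall U : {set 'I_n}, chi U = (q <= \sum_(i in U) w i)).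

Definition swing (n : nat) (chi : {set 'I_n} -> bool) (i : 'I_n) (U : {set 'I_n}) : bool :=
  [&& i \notin U, ~~ chi U & chi (i |: U)].

Definition SS (R : realFieldType) (n : nat) (chi : {set 'I_n} -> bool) (i : 'I_n) : R :=
  (n`!%:R)^-1 * \sum_(U : {set 'I_n} | swing chi i U) ((#|U|`! * (n - #|U| - 1)`!)%N)%:R.

Definition dist1 (R : realFieldType) (n : nat) (d : 'I_n -> R) (chi : {set 'I_n} -> bool) : R :=
  \sum_(i < n) `|d i - SS R chi i|.

Definition v1 : 'I_3 := @Ordinal 3 0 isT.
Definition v2 : 'I_3 := @Ordinal 3 1 isT.
Definition v3 : 'I_3 := @Ordinal 3 2 isT.

Definition equality_region (R : realFieldType) (d : 'I_3 -> R) : Prop :=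
  let d1 := d v1 in let d2 := d v2 in
     (d1 = 5%:R / 6%:R /\ (1 / 12%:R <= d2 <= 1 / 6%:R)) \/
      ((2%:R / 3%:R <= d1 <= 5%:R / 6%:R) /\ d1 + d2 = 1) \/
      ((1 / 2%:R <= d1 <= 2%:R / 3%:R) /\ d2 = 1 / 3%:R) \/
      (d1 = 1 / 2%:R /\ (1 / 4%:R <= d2 <= 1 / 3%:R)) \/
      ((5%:R / 12%:R <= d1 <= 1 / 2%:R) /\ d1 + d2 = 5%:R / 6%:R).

From HB Require Import structures.
From mathcomp Require Import all_boot all_order all_algebra.
From mathcomp Require Import lra.
Import Order.TTheory GRing.Theory Num.Theory.
Local Open Scope ring_scope.
Set Implicit Arguments. Unset Strict Implicit. Unset Printing Implicit Defensive.

(* For three voters, 6 SS(chi) depends only on the values of chi on the six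
   proper nonempty coalitions (ss6, SS3E), and monotonicity leaves exactly
   ten possible vectors: the permutations of (6,0,0), (4,1,1), (3,3,0) and
   (2,2,2) (ss_profile_simple).  The four sorted ones are realised by quota
   games with natural weights (sorted_profiles_attained).  On the real side,
   for d sorted a permuted target is never closer than its sorted version
   (rearrangement, dmin_le_profiles), so the best distance is the minimum
   dmin of four explicit piecewise-linear functions of d; an elementary case
   analysis shows dmin <= 1/3 (dmin_le_third), with equality exactly on the
   five segments of the equality region (dmin_eq_third).  The theorem picks a
   quota game realising the sorted profile at which dmin is attained. *)

Definition quota_game (n : nat) (w : 'I_n -> nat) (q : nat) (U : {set 'I_n}) : bool :=
  (q <= \sum_(i in U) w i)%N.

Lemma quota_game_wvg (R : realFieldType) (n : nat) (w : 'I_n -> nat) (q : nat) :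
  (0 < q)%N -> (q <= \sum_i w i)%N -> weighted_voting_game R (quota_game w q).
Proof.
move=> q_gt0 q_le_total; split.
  split=> [U V /subsetP UV|| ]; rewrite /quota_game.
  - move/leq_trans; apply; apply: (sub_le_big leqnn (fun x y => leq_addr y x)).
    exact: UV.
  - by rewrite big_set0 leqNgt q_gt0.
  - by rewrite (eq_bigl predT) // => i; rewrite inE.
exists (fun i => (w i)%:R), q%:R; split=> [i|U]; first exact: ler0n.
by rewrite /quota_game -natr_sum ler_nat.
Qed.

Lemma ord3P (i : 'I_3) : [\/ i = v1, i = v2 | i = v3].
Proof.
by case: i => [[|[|[|//]]] ?]; [apply: Or31 | apply: Or32 | apply: Or33]; apply: val_inj.
Qed.

Lemma big_ord3 (V : nmodType) (F : 'I_3 -> V) : \sum_i F i = F v1 + F v2 + F v3.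
Proof.
rewrite !big_ord_recr big_ord0 /= add0r.
by congr (F _ + F _ + F _); apply: val_inj.
Qed.

Definition w3 (a b c : nat) (i : 'I_3) : nat := nth 0%N [:: a; b; c] i.

Lemma sum_w3 (a b c : nat) (U : {set 'I_3}) :
  (\sum_(i in U) w3 a b c i = (v1 \in U) * a + (v2 \in U) * b + (v3 \in U) * c)%N.
Proof.
rewrite big_mkcond /= (big_ord3 (fun i => if i \in U then w3 a b c i else 0%N)).
by case: (v1 \in U); case: (v2 \in U); case: (v3 \in U); rewrite ?mul1n ?mul0n.
Qed.

Definition coalitions3 : seq {set 'I_3} :=
  [:: set0; [set v1]; [set v2]; [set v3]; [set v1; v2]; [set v1; v3]; [set v2; v3]; setT].

Definition members3 (U : {set 'I_3}) : bool * bool * bool := (v1 \in U, v2 \in U, v3 \in U).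

Lemma members3_inj : injective members3.
Proof.
move=> U V [e1 e2 e3]; apply/setP => i.
by have [->|->|->] := ord3P i.
Qed.

Lemma coalitions3P (U : {set 'I_3}) : U \in coalitions3.
Proof.
have : members3 U \in map members3 coalitions3.
  by rewrite /members3; case: (v1 \in U); case: (v2 \in U); case: (v3 \in U);
    rewrite /= !inE.
by rewrite mem_map //; exact: members3_inj.
Qed.

Lemma big_set3 (V : nmodType) (F : {set 'I_3} -> V) :
  \sum_U F U = \sum_(U <- coalitions3) F U.
Proof.
apply: perm_big; apply: uniq_perm; first exact: index_enum_uniq.
  by rewrite -(map_inj_uniq members3_inj) /members3 /= !inE.
by move=> U; rewrite mem_index_enum coalitions3P.
Qed.

(* Six times the Shapley-Shubik vector of a three-voter simple game, in terms
   of its values b_i = chi {i} and b_ij = chi {i, j} on the proper nonempty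
   coalitions.  The coefficient |U|! (2 - |U|)! of an i-swing U is 2 for
   U = {} (a swing iff b_i), 1 for U = {j} (iff b_ij and not b_j) and 2 for
   U = N \ {i} (iff not b_jk). *)
Definition ss6 (b1 b2 b3 b12 b13 b23 : bool) : nat * nat * nat :=
  ((2 * b1 + (~~ b2 && b12) + (~~ b3 && b13) + 2 * ~~ b23)%N,
   (2 * b2 + (~~ b1 && b12) + (~~ b3 && b23) + 2 * ~~ b13)%N,
   (2 * b3 + (~~ b1 && b13) + (~~ b2 && b23) + 2 * ~~ b12)%N).

Definition ss_profile (chi : {set 'I_3} -> bool) : nat * nat * nat :=
  ss6 (chi [set v1]) (chi [set v2]) (chi [set v3])
      (chi [set v1; v2]) (chi [set v1; v3]) (chi [set v2; v3]).

Lemma SS_coalitions3 (R : realFieldType) (chi : {set 'I_3} -> bool) (i : 'I_3) :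
  SS R chi i = 6%:R^-1 * \sum_(U <- coalitions3)
    (if swing chi i U then ((#|U|`! * (3 - #|U| - 1)`!)%N)%:R else 0).
Proof. by rewrite /SS big_mkcond /= big_set3. Qed.

Local Ltac set3_eq := apply/setP => i; have [->|->|->] := ord3P i; by rewrite !inE.

Lemma SS3E (R : realFieldType) (chi : {set 'I_3} -> bool) :
  chi set0 = false -> chi setT = true ->
  [/\ SS R chi v1 = (ss_profile chi).1.1%:R / 6%:R,
      SS R chi v2 = (ss_profile chi).1.2%:R / 6%:R
    & SS R chi v3 = (ss_profile chi).2%:R / 6%:R].
Proof.
move=> chi0 chiT.
have e1 : v1 |: [set v2; v3] = setT by set3_eq.
have e2 : v2 |: [set v1; v3] = setT by set3_eq.
have e3 : v3 |: [set v1; v2] = setT by set3_eq.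
have e21 : v2 |: [set v1] = [set v1; v2] by set3_eq.
have e31 : v3 |: [set v1] = [set v1; v3] by set3_eq.
have e32 : v3 |: [set v2] = [set v2; v3] by set3_eq.
have card2 (a b : 'I_3) : a != b -> #|[set a; b]| = 2%N by rewrite cards2 => ->.
rewrite !SS_coalitions3 /ss_profile /coalitions3 !big_cons !big_nil /swing
  !inE /= !setU0 e1 e2 e3 e21 e31 e32 chiT chi0 cards0 !cards1 !card2 //.
case: (chi [set v1]); case: (chi [set v2]); case: (chi [set v3]);
case: (chi [set v1; v2]); case: (chi [set v1; v3]); case: (chi [set v2; v3]);
by split; rewrite /= ?addr0 ?add0r -?natrD mulrC.
Qed.

Definition profiles : seq (nat * nat * nat) :=
  [:: (6,0,0); (0,6,0); (0,0,6); (4,1,1); (1,4,1); (1,1,4);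
      (3,3,0); (3,0,3); (0,3,3); (2,2,2)]%N.

Definition sorted_profiles : seq (nat * nat * nat) :=
  [:: (6,0,0); (4,1,1); (3,3,0); (2,2,2)]%N.

(* Monotonicity on singletons and pairs is all that matters for SS. *)
Lemma ss6_profiles (b1 b2 b3 b12 b13 b23 : bool) :
  [&& b1 ==> b12, b1 ==> b13, b2 ==> b12, b2 ==> b23, b3 ==> b13 & b3 ==> b23] ->
  ss6 b1 b2 b3 b12 b13 b23 \in profiles.
Proof. by case: b1; case: b2; case: b3; case: b12; case: b13; case: b23. Qed.

Lemma ss_profile_simple (chi : {set 'I_3} -> bool) :
  simple_game chi -> ss_profile chi \in profiles.
Proof.
case=> mono _ _; apply: ss6_profiles.
have imp (U V : {set 'I_3}) : U \subset V -> chi U ==> chi V.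
  by move=> sUV; apply/implyP; exact: mono.
by rewrite !imp //; apply/subsetP => i; rewrite !inE => ->; rewrite ?orbT.
Qed.

Definition dist6 (R : realFieldType) (d : 'I_3 -> R) (t : nat * nat * nat) : R :=
  `|d v1 - t.1.1%:R / 6%:R| + `|d v2 - t.1.2%:R / 6%:R| + `|d v3 - t.2%:R / 6%:R|.

Lemma dist1_ss_profile (R : realFieldType) (d : 'I_3 -> R) (chi : {set 'I_3} -> bool) :
  chi set0 = false -> chi setT = true -> dist1 d chi = dist6 d (ss_profile chi).
Proof.
move=> chi0 chiT; have [e1 e2 e3] := SS3E R chi0 chiT.
by rewrite /dist1 (big_ord3 (fun i => `|d i - SS R chi i|)) e1 e2 e3.
Qed.

(* Each sorted profile is the SS vector (times 6) of a weighted voting game: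
   a dictator, a veto player among three, two equal players and a dummy, and
   three equal players. *)
Lemma sorted_profiles_attained (R : realFieldType) (t : nat * nat * nat) :
  t \in sorted_profiles ->
  exists2 chi, weighted_voting_game R chi & forall d : 'I_3 -> R, dist1 d chi = dist6 d t.
Proof.
have attained a b c q : (0 < q)%N -> (q <= a + b + c)%N ->
    exists2 chi, weighted_voting_game R chi &
      forall d : 'I_3 -> R, dist1 d chi = dist6 d (ss_profile (quota_game (w3 a b c) q)).
  move=> q_gt0 q_le; have q_le_total : (q <= \sum_i w3 a b c i)%N.
    by rewrite (big_ord3 (w3 a b c)).
  have wvg := quota_game_wvg R q_gt0 q_le_total.
  exists (quota_game (w3 a b c) q) => //.
  have [[_ chi0 chiT] _] := wvg.
  by move=> d; apply: dist1_ss_profile.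
rewrite !inE => /or4P[] /eqP ->.
- by have := attained 1 0 0 1; rewrite /ss_profile /quota_game !sum_w3 !inE; apply.
- by have := attained 2 1 1 3; rewrite /ss_profile /quota_game !sum_w3 !inE; apply.
- by have := attained 1 1 0 2; rewrite /ss_profile /quota_game !sum_w3 !inE; apply.
- by have := attained 1 1 1 1; rewrite /ss_profile /quota_game !sum_w3 !inE; apply.
Qed.

Lemma normP (R : realFieldType) (t : R) :
  (0 <= t /\ `|t| = t) \/ (t < 0 /\ `|t| = - t).
Proof. by case: (lerP 0 t) => h; [left; rewrite ger0_norm | right; rewrite ltr0_norm]. Qed.

(* Piecewise-linear arithmetic: remove each absolute value of the goal, using
   its sign when linear arithmetic decides it and splitting cases otherwise. *)
Local Ltac split_norms :=
  repeat match goal with |- context[`|?t|] =>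
    first [ rewrite (@ger0_norm _ t); last lra
          | rewrite (@ler0_norm _ t); last lra
          | let e := fresh in case: (normP t) => [[? e]|[? e]]; rewrite e; clear e ]
  end.
Local Ltac norm_lra := repeat match goal with H : context[`|_|] |- _ => revert H end;
  split_norms; intros; lra.

Lemma norm_rearrange (R : realFieldType) (x y a b : R) :
  y <= x -> b <= a -> `|x - a| + `|y - b| <= `|x - b| + `|y - a|.
Proof. by move=> yx ba; norm_lra. Qed.

Section SortedDistances.

Variables (R : realFieldType) (d : 'I_3 -> R).
Hypotheses (d12 : d v2 <= d v1) (d23 : d v3 <= d v2) (d3 : 0 <= d v3)
  (dsum : d v1 + d v2 + d v3 = 1).

Definition dmin : R :=
  Num.min (Num.min (dist6 d (6,0,0)%N) (dist6 d (4,1,1)%N))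
          (Num.min (dist6 d (3,3,0)%N) (dist6 d (2,2,2)%N)).

Lemma dmin_sorted : exists2 t, t \in sorted_profiles & dmin = dist6 d t.
Proof.
have min_closed (a b : R) (P : R -> Prop) : P a -> P b -> P (Num.min a b).
  by rewrite minEle; case: ifP.
pose P v := exists2 t, t \in sorted_profiles & v = dist6 d t.
suff : P dmin by [].
by apply: (min_closed); apply: (min_closed);
  (eexists; last reflexivity); rewrite !inE eqxx ?orbT.
Qed.

Lemma dmin_le_sorted t : t \in sorted_profiles -> dmin <= dist6 d t.
Proof. by rewrite !inE => /or4P[]/eqP->; rewrite /dmin !ge_min lexx ?orbT. Qed.

(* Since d is sorted, a permuted profile is never closer to d than the sorted
   one it comes from (each is a single transposition away from it). *)
Lemma dmin_le_profiles : {in profiles, forall t, dmin <= dist6 d t}.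
Proof.
have d13 : d v3 <= d v1 by apply: le_trans d12.
have le6 (a b : nat) : (b <= a)%N -> b%:R / 6%:R <= a%:R / 6%:R :> R.
  by move=> ba; rewrite ler_pM2r ?ler_nat // invr_gt0 ltr0n.
have swap12 a b c : (b <= a)%N -> dist6 d (a,b,c) <= dist6 d (b,a,c).
  by move=> /le6 ba; have := norm_rearrange d12 ba; rewrite /dist6 /=; lra.
have swap13 a b c : (c <= a)%N -> dist6 d (a,b,c) <= dist6 d (c,b,a).
  by move=> /le6 ca; have := norm_rearrange d13 ca; rewrite /dist6 /=; lra.
have swap23 a b c : (c <= b)%N -> dist6 d (a,b,c) <= dist6 d (a,c,b).
  by move=> /le6 cb; have := norm_rearrange d23 cb; rewrite /dist6 /=; lra.
have m600 := @dmin_le_sorted (6,0,0)%N isT.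
have m411 := @dmin_le_sorted (4,1,1)%N isT.
have m330 := @dmin_le_sorted (3,3,0)%N isT.
have m222 := @dmin_le_sorted (2,2,2)%N isT.
apply/allP; do !(apply/andP; split) => //.
- exact: le_trans m600 (swap12 _ _ _ _).
- exact: le_trans m600 (swap13 _ _ _ _).
- exact: le_trans m411 (swap12 _ _ _ _).
- exact: le_trans m411 (swap13 _ _ _ _).
- exact: le_trans m330 (swap23 _ _ _ _).
- exact: le_trans m330 (swap13 _ _ _ _).
Qed.

(* [lra] does not consult section hypotheses, so they are first moved into
   the goal. *)
Local Ltac sorted_lra := move: (d12) (d23) (d3) (dsum); norm_lra.

Local Notation x := (d v1).
Local Notation y := (d v2).
Local Notation z := (d v3).

Lemma sorted_dists_closed :
  [/\ dist6 d (6,0,0)%N = 2%:R - 2%:R * x,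
      dist6 d (3,3,0)%N = `|x - 1/2%:R| + (1/2%:R - y) + z
    & dist6 d (2,2,2)%N = x - 1/3%:R + `|y - 1/3%:R| + (1/3%:R - z)].
Proof. by rewrite /dist6 /=; split; sorted_lra. Qed.

Lemma dmin_le_third : dmin <= 1/3%:R.
Proof.
suff [t t_in t_le] : exists2 t, t \in sorted_profiles & dist6 d t <= 1/3%:R.
  exact: le_trans (dmin_le_sorted t_in) t_le.
have [x_le|x_gt] := lerP x (1/2%:R).
  have [z_le|z_gt] := lerP z (1/6%:R).
    by exists (3,3,0)%N => //; have [_ -> _] := sorted_dists_closed; sorted_lra.
  by exists (2,2,2)%N => //; have [_ _ ->] := sorted_dists_closed; sorted_lra.
have [y_ge|y_lt] := lerP (1/3%:R) y.
  by exists (3,3,0)%N => //; have [_ -> _] := sorted_dists_closed; sorted_lra.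
have [x_ge|x_lt] := lerP (5%:R/6%:R) x.
  by exists (6,0,0)%N => //; have [-> _ _] := sorted_dists_closed; sorted_lra.
by exists (4,1,1)%N => //; rewrite /dist6 /=; sorted_lra.
Qed.

Lemma region_of_far :
  (forall t, t \in sorted_profiles -> 1/3%:R <= dist6 d t) -> equality_region d.
Proof.
move=> far; have [e600 e330 e222] := sorted_dists_closed.
have f600 := far (6,0,0)%N isT; have f411 := far (4,1,1)%N isT.
have f330 := far (3,3,0)%N isT; have f222 := far (2,2,2)%N isT.
rewrite e600 in f600; rewrite e330 in f330; rewrite e222 in f222.
rewrite /dist6 /= in f411; rewrite /equality_region /=; clear far e600 e330 e222.
have [x_lt12|x_ge12] := ltrP x (1/2%:R).
  by clear f411; do 4 right; split; [apply/andP; split|]; sorted_lra.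
have [x_le12|x_gt12] := lerP x (1/2%:R).
  by clear f411; do 3 right; left; split; [|apply/andP; split]; sorted_lra.
have [x_le23|x_gt23] := lerP x (2%:R/3%:R).
  by clear f600 f222; do 2 right; left; split; [apply/andP; split|]; sorted_lra.
have [x_lt56|x_ge56] := ltrP x (5%:R/6%:R).
  by clear f600 f330 f222; right; left; split; [apply/andP; split|]; sorted_lra.
by clear f411 f330 f222; left; split; [|apply/andP; split]; sorted_lra.
Qed.

Lemma far_of_region :
  equality_region d -> forall t, t \in sorted_profiles -> 1/3%:R <= dist6 d t.
Proof.
rewrite /equality_region /= => region t; have [e600 e330 e222] := sorted_dists_closed.
rewrite !inE => /or4P[]/eqP->; rewrite ?e600 ?e330 ?e222 /dist6 /=;
case: region => [[? /andP[? ?]]|[[/andP[? ?] ?]|[[/andP[? ?] ?]|[[? /andP[? ?]]|[/andP[? ?] ?]]]]];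
sorted_lra.
Qed.

Lemma dmin_eq_third : dmin = 1/3%:R <-> equality_region d.
Proof.
split=> [dmin_third|region].
  by apply: region_of_far => t /dmin_le_sorted; rewrite dmin_third.
apply/eqP; rewrite eq_le dmin_le_third /= /dmin !le_min.
by rewrite !far_of_region.
Qed.

End SortedDistances.

Theorem mainTheorem3 (R : realFieldType) (d : 'I_3 -> R)
    (h12 : d v2 <= d v1) (h23 : d v3 <= d v2) (h3 : 0 <= d v3)
    (hsum : d v1 + d v2 + d v3 = 1) :
  exists chi0 : {set 'I_3} -> bool,
    [/\ weighted_voting_game R chi0,
        (forall chi, weighted_voting_game R chi -> dist1 d chi0 <= dist1 d chi),
        dist1 d chi0 <= 1 / 3%:R
      & (dist1 d chi0 = 1 / 3%:R <-> equality_region d)].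
Proof.
have [t t_sorted dmin_t] := dmin_sorted d.
have [chi0 chi0_wvg dist_chi0] := sorted_profiles_attained R t_sorted.
exists chi0; rewrite dist_chi0 -dmin_t; split=> //.
- move=> chi [chi_simple _]; have [_ chi_0 chi_T] := chi_simple.
  rewrite dist1_ss_profile //; apply: dmin_le_profiles => //.
  exact: ss_profile_simple.
- exact: dmin_le_third.
- exact: dmin_eq_third.
Qed.
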